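(* Let $G$ be a graph formed from the claw $K_{1,3}$ by subdividing a single edge $0$ or more times. If $L$ is a list-assignment with $|L(v)|\ge\deg(v)+1$ for all $v\in V(G)$ and $\alpha,\beta$ are unfrozen $L$-colourings, then $\alpha\sim\beta$.
   Context: An $L$-colouring is a proper colouring $\varphi$ with $\varphi(v)\in L(v)$ for all $v$. A vertex $v$ is frozen under $\varphi$ if every colour of $L(v)\setminus\{\varphi(v)\}$ appears on a neighbour of $v$; a colouring is unfrozen if at least one vertex is not frozen. $\alpha\sim\beta$ means $\alpha$ can be transformed into $\beta$ by a sequence of single-vertex recolouring steps, each keeping the colouring a proper $L$-colouring. *)

From mathcomp Require Import all_boot.
Set Implicit Arguments. Unset Strict Implicit. Unset Printing Implicit Defensive.

(* A finite simple graph is given by a vertex finType V and a symmetric,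
   irreflexive adjacency relation adj : rel V. Colours range over a finType C;
   a list-assignment is L : V -> {set C}. *)

Section Colouring.
Variables (V C : finType) (adj : rel V).

Definition deg (v : V) : nat := #|[set w | adj v w]|.

Definition is_Lcol (L : V -> {set C}) (phi : V -> C) : Prop :=
  (forall v, phi v \in L v) /\ (forall u v, adj u v -> phi u <> phi v).

Definition frozen (L : V -> {set C}) (phi : V -> C) (v : V) : Prop :=
  forall c, c \in L v -> c <> phi v -> exists2 w, adj v w & phi w = c.

Definition unfrozen (L : V -> {set C}) (phi : V -> C) : Prop :=
  exists v, ~ frozen L phi v.

Definition recol_step (alpha beta : V -> C) : Prop :=
  exists v, forall w, w <> v -> alpha w = beta w.

Inductive reconf (L : V -> {set C}) : (V -> C) -> (V -> C) -> Prop :=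
  | reconf_refl phi : is_Lcol L phi -> reconf L phi phi
  | reconf_step alpha beta gamma :
      reconf L alpha beta -> is_Lcol L gamma -> recol_step beta gamma ->
      reconf L alpha gamma.

End Colouring.

(* The claw K_{1,3} with one edge subdivided k times, on vertex set 'I_(k+4):
   0 = centre, 1 and 2 = unsubdivided leaves, and the path 0 - 3 - 4 - ... - (k+3). *)
Definition claw_base (k : nat) (u v : 'I_(k + 4)) : bool :=
  ((val u == 0) && ((val v == 1) || (val v == 2) || (val v == 3)))
  || ((3 <= val u) && (val v == (val u).+1)).

Definition subdiv_claw (k : nat) : rel 'I_(k + 4) :=
  fun u v => claw_base u v || claw_base v u.
Arguments subdiv_claw k : clear implicits.

From mathcomp Require Import all_boot zify.
Set Implicit Arguments. Unset Strict Implicit. Unset Printing Implicit Defensive.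

(* By induction on i >= 2, two colourings that agree beyond vertex i and
   each have an unfrozen vertex among 0..i are reconfigurable.
   For i = 2 only the centre and the leaves move: the centre can go from colour s
   to colour t as soon as each leaf has a colour outside {s, t}, and an unfrozen
   vertex provides such a first move.  If no chain of at most two moves joins the
   two centre colours, three distinct pairs of colours would each be one of the
   two leaf lists.
   For the step to i+1, an unfrozen vertex is first pushed into 0..i: if the
   parent of i+1 is frozen, its neighbours carry distinct colours (the lists have
   size deg+1), so recolouring i+1 frees its old colour at the parent.  Both
   colourings are then joined through a colouring chi that agrees with the first
   one beyond i and can be recoloured at i+1 to the colour of the second; the
   colours chi gives to 0, 1, 2 keep one of them unfrozen whatever happens on the
   path. *)

Section SmallSets.
Variable T : finType.

Lemma exists_avoid (S F : {set T}) : #|F| < #|S| -> exists2 c, c \in S & c \notin F.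
Proof.
move=> ltFS; apply/subsetPn; apply: contraTN ltFS => /subset_leq_card.
by rewrite leqNgt.
Qed.

Lemma avoid1 (S : {set T}) a : 1 < #|S| -> exists2 c, c \in S & c != a.
Proof.
move=> gt1; have [|c Sc] := @exists_avoid S [set a]; first by rewrite cards1.
by rewrite in_set1; exists c.
Qed.

Lemma avoid2 (S : {set T}) a b : 2 < #|S| -> exists c, [/\ c \in S, c != a & c != b].
Proof.
move=> gt2; have [|c Sc] := @exists_avoid S [set a; b].
  by rewrite cards2; case: (a != b); lia.
by rewrite !inE negb_or => /andP[]; exists c.
Qed.

Lemma avoid3 (S : {set T}) a b d : 3 < #|S| ->
  exists c, [/\ c \in S, c != a, c != b & c != d].
Proof.
move=> gt3; have [|c Sc] := @exists_avoid S (a |: [set b; d]).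
  rewrite cardsU1 cards2; case: (_ \notin _); case: (b != d); lia.
by rewrite !inE !negb_or => /and3P[]; exists c.
Qed.

Lemma subset_set2_eq (A : {set T}) a b :
  A \subset [set a; b] -> 1 < #|A| -> A = [set a; b].
Proof.
move=> sAab gt1; apply/eqP; rewrite eqEcard sAab cards2.
by case: (a != b); lia.
Qed.

Lemma not_subset_set2 (A : {set T}) a b c :
  c \in A -> c != a -> c != b -> ~~ (A \subset [set a; b]).
Proof. by move=> Ac ca cb; apply/subsetPn; exists c; rewrite // !inE negb_or ca. Qed.

End SmallSets.

Section Recolouring.
Variables (V C : finType) (adj : rel V) (L : V -> {set C}).
Hypotheses (adj_sym : symmetric adj) (adj_irr : irreflexive adj).

Local Notation col := (is_Lcol adj L).
Local Notation reconfL := (reconf adj L).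

Lemma reconf_is_Lcol a b : reconfL a b -> col a /\ col b.
Proof. by elim=> [phi ? | ? ? ? _ [? _] ? _]; split. Qed.

Lemma reconf_trans a b c : reconfL a b -> reconfL b c -> reconfL a c.
Proof.
move=> rab rbc; elim: rbc rab => [// | b' c' d _ IH col_d step /IH rab'].
exact: reconf_step rab' col_d step.
Qed.

Lemma reconf_sym a b : reconfL a b -> reconfL b a.
Proof.
elim=> [phi /reconf_refl // | {}a {}b c rab rba col_c [v same]].
apply: reconf_trans rba; have [_ col_b] := reconf_is_Lcol rab.
by apply: reconf_step (reconf_refl col_c) col_b _; exists v => w /same.
Qed.

Definition recolour (phi : V -> C) (x : V) (c : C) : V -> C :=
  fun w => if w == x then c else phi w.

Lemma recolour_at phi x c : recolour phi x c x = c.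
Proof. by rewrite /recolour eqxx. Qed.

Lemma recolour_id phi x c w : w != x -> recolour phi x c w = phi w.
Proof. by rewrite /recolour => /negbTE ->. Qed.

Definition proper_on (P : pred V) (phi : V -> C) :=
  (forall v, P v -> phi v \in L v) /\
  (forall u v, P u -> P v -> adj u v -> phi u <> phi v).

Lemma proper_on_sub (P Q : pred V) phi :
  {subset Q <= P} -> proper_on P phi -> proper_on Q phi.
Proof. by move=> sQP [inL prop]; split=> [v /sQP | u v /sQP Pu /sQP]; auto. Qed.

Lemma is_Lcol_proper_on P phi : col phi -> proper_on P phi.
Proof. by move=> [inL prop]; split=> // u v _ _; apply: prop. Qed.

Lemma proper_onT phi : proper_on predT phi -> col phi.
Proof. by move=> [inL prop]; split=> [v | u v]; [apply: inL | apply: prop]. Qed.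

Lemma proper_on_recolour P phi x c : proper_on P phi -> c \in L x ->
    (forall w, P w -> adj x w -> phi w <> c) ->
  proper_on (predU1 x P) (recolour phi x c).
Proof.
move=> [inL prop] Lc fresh; split=> [v | u v] /=.
  by case: (eqVneq v x) => [-> _ | vx]; rewrite ?recolour_at ?recolour_id // => /inL.
case: (eqVneq u x) => [-> | ux]; case: (eqVneq v x) => [-> | vx] //=.
- by rewrite adj_irr.
- by move=> _ Pv xv; rewrite recolour_at recolour_id //; apply/nesym/fresh.
- by move=> Pu _; rewrite adj_sym recolour_at recolour_id //; apply: fresh.
- by move=> Pu Pv uv; rewrite !recolour_id //; apply: prop.
Qed.

Lemma is_Lcol_recolour phi x c : col phi -> c \in L x ->
  (forall w, adj x w -> phi w <> c) -> col (recolour phi x c).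
Proof.
move=> /(is_Lcol_proper_on predT) col_phi Lc fresh; apply: proper_onT.
apply: proper_on_sub (proper_on_recolour col_phi Lc _) => [w _ | w _ /fresh] //.
by rewrite !inE orbT.
Qed.

Lemma reconf_recolour a phi x c : reconfL a phi -> c \in L x ->
  (forall w, adj x w -> phi w <> c) -> reconfL a (recolour phi x c).
Proof.
move=> r_a_phi Lc fresh; have [_ col_phi] := reconf_is_Lcol r_a_phi.
apply: reconf_step r_a_phi (is_Lcol_recolour col_phi Lc fresh) _.
by exists x => w /eqP /recolour_id ->.
Qed.

Lemma frozenP phi v : reflect (frozen adj L phi v)
  [forall c in L v, (c != phi v) ==> [exists w, adj v w && (phi w == c)]].
Proof.
apply: (iffP forall_inP) => [seen c Lc /eqP cv | fr c Lc].
  by have /existsP[w /andP[vw /eqP]] := implyP (seen c Lc) cv; exists w.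
by apply/implyP=> /eqP /(fr c Lc) [w vw wc]; apply/existsP; exists w; rewrite vw wc eqxx.
Qed.

Lemma frozenPn phi v : ~ frozen adj L phi v ->
  exists c, [/\ c \in L v, c != phi v & forall w, adj v w -> phi w <> c].
Proof.
move/frozenP/forall_inPn=> [c Lc]; rewrite negb_imply negb_exists => /andP[cv /forallP unseen].
by exists c; split=> // w vw wc; move: (unseen w); rewrite vw wc eqxx.
Qed.

Lemma unfrozen_by phi v c : c \in L v -> c != phi v ->
  (forall w, adj v w -> phi w <> c) -> ~ frozen adj L phi v.
Proof. by move=> Lc /eqP cv fresh /(_ c Lc cv) [w /fresh]. Qed.

Lemma pendant_unfrozen phi l p : (forall w, adj l w = (w == p)) ->
  1 < #|L l| -> phi p \notin L l -> ~ frozen adj L phi l.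
Proof.
move=> nbr_l gt1 pL; have [c Lc cl] := avoid1 (phi l) gt1.
apply: (unfrozen_by Lc cl) => w; rewrite nbr_l => /eqP -> pc.
by rewrite pc Lc in pL.
Qed.

(* [L p :\ phi p] has at least [deg p] colours, all carried by neighbours. *)
Lemma frozen_nbr_colour_unique phi p w : deg adj p < #|L p| -> phi p \in L p ->
    frozen adj L phi p -> adj p w ->
  phi w \in L p /\ (forall w', adj p w' -> phi w' = phi w -> w' = w).
Proof.
move=> deg_lt Lp fr pw; set N := [set w | adj p w].
have sub : L p :\ phi p \subset phi @: N.
  apply/subsetP=> c; rewrite in_setD1 => /andP[/eqP cp Lc].
  by have [w' pw' <-] := fr c Lc cp; apply: imset_f; rewrite inE.
have card_eq : #|L p :\ phi p| = #|phi @: N|.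
  have := subset_leq_card sub; have := leq_imset_card phi N.
  by move: deg_lt; rewrite /deg -/N (cardsD1 (phi p)) Lp; lia.
have Nw : w \in N by rewrite inE.
split.
  have : phi w \in phi @: N by apply: imset_f.
  by rewrite -(subset_cardP card_eq sub) in_setD1 => /andP[].
have /imset_injP inj : #|phi @: N| == #|N|.
  by rewrite eqn_leq leq_imset_card -card_eq; move: deg_lt; rewrite /deg (cardsD1 (phi p)) Lp.
by move=> w' pw' /inj; apply; rewrite // inE.
Qed.

End Recolouring.

Section SubdividedClaw.
Variables (k : nat) (C : finType) (L : 'I_(k + 4) -> {set C}).
Local Notation V := 'I_(k + 4).
Local Notation adj := (subdiv_claw k).
Local Notation col := (is_Lcol adj L).
Local Notation reconfL := (reconf adj L).
Hypothesis L_big : forall v, (deg adj v).+1 <= #|L v|.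

Lemma adjE (u v : V) : adj u v =
  [|| (u == 0 :> nat) && [|| v == 1 :> nat, v == 2 :> nat | v == 3 :> nat],
      (3 <= u) && (v == u.+1 :> nat),
      (v == 0 :> nat) && [|| u == 1 :> nat, u == 2 :> nat | u == 3 :> nat]
    | (3 <= v) && (u == v.+1 :> nat)].
Proof. by rewrite /subdiv_claw /claw_base !orbA. Qed.

Lemma claw_sym : symmetric adj.
Proof. by move=> u v; rewrite /subdiv_claw orbC. Qed.

Lemma claw_irr : irreflexive adj.
Proof. by move=> u; apply/negbTE; rewrite adjE; lia. Qed.

Lemma k4_gt0 : 0 < k + 4. Proof. by rewrite addn4. Qed.

Definition vtx (i : nat) : V := insubd (Ordinal k4_gt0) i.

Lemma vtxK i : i < k + 4 -> vtx i = i :> nat.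
Proof. by move=> ltik; rewrite val_insubd /= ltik. Qed.

Lemma vtx_eq (w : V) i : i < k + 4 -> (w == vtx i) = (w == i :> nat).
Proof. by move=> ltik; rewrite -(inj_eq val_inj) /= vtxK. Qed.

Lemma vtx_ord (w : V) : vtx w = w.
Proof. by apply/eqP; rewrite eq_sym vtx_eq. Qed.

Lemma vtx_small_eq i j : i < 4 -> j < 4 -> (vtx i == vtx j) = (i == j).
Proof. by move=> i4 j4; rewrite vtx_eq ?vtxK; lia. Qed.

Local Notation v0 := (vtx 0).
Local Notation v1 := (vtx 1).
Local Notation v2 := (vtx 2).
Local Notation v3 := (vtx 3).

Lemma vtx_le2 (w : V) : w <= 2 -> [\/ w = v0, w = v1 | w = v2].
Proof.
move=> le2; rewrite -(vtx_ord w).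
have : w = 0 :> nat \/ w = 1 :> nat \/ w = 2 :> nat by lia.
by case=> [|[|]] ->; [apply: Or31 | apply: Or32 | apply: Or33].
Qed.

Lemma vtx_gt2 (w : V) : 2 < w -> [&& w != v0, w != v1 & w != v2].
Proof. by move=> gt2; rewrite !vtx_eq; lia. Qed.

Lemma adj_v0 w : adj v0 w -> [\/ w = v1, w = v2 | w = v3].
Proof.
rewrite adjE vtxK; last lia; move=> v0w; rewrite -(vtx_ord w).
have : w = 1 :> nat \/ w = 2 :> nat \/ w = 3 :> nat by lia.
by case=> [|[|]] ->; [apply: Or31 | apply: Or32 | apply: Or33].
Qed.

Lemma adj_v1E w : adj v1 w = (w == v0).
Proof. by rewrite adjE vtx_eq ?vtxK; lia. Qed.

Lemma adj_v2E w : adj v2 w = (w == v0).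
Proof. by rewrite adjE vtx_eq ?vtxK; lia. Qed.

Lemma adj_v0v3 : adj v0 v3.
Proof. by rewrite adjE ?vtxK; lia. Qed.

Definition parent (j : nat) : V := if j == 3 then v0 else vtx j.-1.

Lemma parent_lt j : 3 <= j < k + 4 -> parent j < j.
Proof.
by move=> j_path; rewrite /parent; case: (eqVneq j 3) => [-> | ne3]; rewrite ?vtxK; lia.
Qed.

Lemma adj_parent j : 3 <= j < k + 4 -> adj (vtx j) (parent j).
Proof.
by move=> j_path; rewrite /parent; case: (eqVneq j 3) => [-> | ne3]; rewrite adjE ?vtxK; lia.
Qed.

Lemma adj_path j w : 3 <= j < k + 4 -> adj (vtx j) w -> w = parent j \/ w = j.+1 :> nat.
Proof.
move=> j_path jw.
suff : (w == parent j) || (w == j.+1 :> nat) by case/orP=> /eqP; [left | right].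
by move: jw; rewrite /parent; case: (eqVneq j 3) => [-> | ne3]; rewrite adjE vtx_eq ?vtxK; lia.
Qed.

Lemma card_nbrs_lt v (S : {set V}) : (forall w, w \in S -> adj v w) -> #|S| < #|L v|.
Proof.
move=> sub; apply: leq_trans (L_big v); rewrite ltnS.
by apply/subset_leq_card/subsetP => w /sub; rewrite inE.
Qed.

Lemma L_gt1 v : 1 < #|L v|.
Proof.
have [w vw] : exists w, adj v w.
  have v_lt := ltn_ord v.
  case: (ltnP v 3) => [lt3 | ge3].
    by case: (posnP v) => [v0 | v_gt0]; [exists v1 | exists v0]; rewrite adjE vtxK; lia.
  by exists (parent v); rewrite -{1}(vtx_ord v) adj_parent ?ge3.
by rewrite -(cards1 w); apply: card_nbrs_lt => w' /set1P ->.
Qed.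

Lemma L_v0_gt3 : 3 < #|L v0|.
Proof.
have -> : 3 = #|v1 |: [set v2; v3]| by rewrite cardsU1 cards2 !inE !vtx_eq ?vtxK; lia.
by apply: card_nbrs_lt => w; rewrite !inE => /or3P[] /eqP ->; rewrite adjE ?vtxK; lia.
Qed.

Lemma L_path_gt2 j : 3 <= j <= k + 2 -> 2 < #|L (vtx j)|.
Proof.
move=> j_mid; have j_path : 3 <= j < k + 4 by lia.
have -> : 2 = #|[set parent j; vtx j.+1]|.
  by rewrite cards2 vtx_eq ?vtxK; have := parent_lt j_path; lia.
apply: card_nbrs_lt => w /set2P[] ->; first exact: adj_parent.
by rewrite adjE ?vtxK; lia.
Qed.

Definition agree_above (i : nat) (a b : V -> C) := forall v : V, i < v -> a v = b v.

Definition unfrozen_upto (i : nat) (a : V -> C) :=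
  exists2 v : V, v <= i & ~ frozen adj L a v.

Lemma unfrozen_upto_mono i j a : i <= j -> unfrozen_upto i a -> unfrozen_upto j a.
Proof. by move=> le_ij [v le_vi unfr]; exists v => //; apply: leq_trans le_ij. Qed.

(* Keeps a vertex of 0, 1, 2 unfrozen whatever the colours on the path. *)
Definition slack (phi : V -> C) :=
  [\/ phi v0 \notin L v1, phi v0 \notin L v2 | phi v1 = phi v2].

Lemma slack_unfrozen phi : slack phi -> unfrozen_upto 2 phi.
Proof.
case=> [nL1 | nL2 | e12].
- by exists v1; [rewrite vtxK; lia | apply: pendant_unfrozen adj_v1E (L_gt1 _) nL1].
- by exists v2; [rewrite vtxK; lia | apply: pendant_unfrozen adj_v2E (L_gt1 _) nL2].
exists v0; first by rewrite vtxK; lia.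
have [c [Lc c0 c1 c3]] := avoid3 (phi v0) (phi v1) (phi v3) L_v0_gt3.
by apply: (unfrozen_by Lc c0) => w /adj_v0[] ->; rewrite -?e12; apply/eqP; rewrite eq_sym.
Qed.

Lemma slack_recolour phi (x : V) c : 2 < x -> slack phi -> slack (recolour phi x c).
Proof. by move=> /vtx_gt2 /and3P[x0 x1 x2]; rewrite /slack !recolour_id // eq_sym. Qed.

Lemma core_colours x z : exists c0 c1 c2,
  [/\ [/\ c0 \in L v0, c0 != x & c0 != z], (c1 \in L v1) && (c1 != c0),
      (c2 \in L v2) && (c2 != c0) & [\/ c0 \notin L v1, c0 \notin L v2 | c1 = c2]].
Proof.
case: (set_0Vmem (L v1 :&: L v2)) => [disj | [c]].
  have [c0 [L0 c0x c0z]] := avoid2 x z (ltnW L_v0_gt3).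
  have [c1 L1 c10] := avoid1 c0 (L_gt1 v1); have [c2 L2 c20] := avoid1 c0 (L_gt1 v2).
  exists c0, c1, c2; split; rewrite ?L1 ?L2 //.
  have : c0 \notin L v1 :&: L v2 by rewrite disj inE.
  by rewrite inE negb_and => /orP[]; [apply: Or31 | apply: Or32].
rewrite inE => /andP[L1 L2]; have [c0 [L0 c0x c0z c0c]] := avoid3 x z c L_v0_gt3.
have cc0 : c != c0 by rewrite eq_sym.
by exists c0, c, c; rewrite L1 L2 cc0; split=> //; apply: Or33.
Qed.

Lemma extend_core phi z : proper_on adj L [pred w : V | 2 < w] phi ->
  exists chi, [/\ col chi, agree_above 2 chi phi, chi v0 != z & slack chi].
Proof.
move=> phi_top.
have [c0 [c1 [c2 [[L0 c0x c0z] /andP[L1 c10] /andP[L2 c20] slack_c]]]] :=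
  core_colours (phi v3) z.
set phi0 := recolour phi v0 c0; set phi1 := recolour phi0 v1 c1.
set chi := recolour phi1 v2 c2.
have [chi0 chi1 chi2] : [/\ chi v0 = c0, chi v1 = c1 & chi v2 = c2].
  by rewrite /chi /phi1 /phi0 /recolour !vtx_small_eq.
exists chi; split; [| by move=> w /vtx_gt2 /and3P[w0 w1 w2]; rewrite /chi /phi1 /phi0 !recolour_id
                     | by rewrite chi0 | by rewrite /slack chi0 chi1 chi2].
pose P := predU1 v2 (predU1 v1 (predU1 v0 [pred w : V | 2 < w])).
apply/proper_onT/(proper_on_sub (P := P)).
  by move=> w _; rewrite !inE; case: (ltnP 2 w) => [_ | /vtx_le2[] ->]; rewrite ?eqxx ?orbT.
rewrite /P /chi /phi1 /phi0.
apply: (proper_on_recolour claw_sym claw_irr _ L2); last first.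
  move=> w _; rewrite adj_v2E => /eqP ->.
  by rewrite /recolour !vtx_small_eq //=; apply/eqP; rewrite eq_sym.
apply: (proper_on_recolour claw_sym claw_irr _ L1); last first.
  by move=> w _; rewrite adj_v1E => /eqP ->; rewrite recolour_at; apply/eqP; rewrite eq_sym.
apply: (proper_on_recolour claw_sym claw_irr phi_top L0).
move=> w /= gt2 /adj_v0[] w_eq; last by rewrite w_eq; apply/eqP; rewrite eq_sym.
all: by move: gt2; rewrite w_eq vtxK; lia.
Qed.

Lemma extend_path i phi z : 2 <= i <= k + 2 ->
    proper_on adj L [pred w : V | i < w] phi ->
  exists chi, [/\ col chi, agree_above i chi phi, chi (parent i.+1) != z & slack chi].
Proof.
elim: i phi z => [// | i IH] phi z.
have [-> _ | ne1 i_mid phi_top] := eqVneq i 1; first exact: extend_core.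
set x := vtx i.+1.
have x_mid : 3 <= i.+1 <= k + 2 by lia.
have x_path : 3 <= i.+1 < k + 4 by lia.
have [c [Lc cz c_next]] := avoid2 z (phi (vtx i.+2)) (L_path_gt2 x_mid).
have x_eq w : (w == x) = (w == i.+1 :> nat) by rewrite vtx_eq //; lia.
have top' : proper_on adj L [pred w : V | i < w] (recolour phi x c).
  apply: proper_on_sub (proper_on_recolour claw_sym claw_irr phi_top Lc _).
    by move=> w; rewrite !inE x_eq; lia.
  move=> w /= gt_w /(adj_path x_path) [w_par | w_next].
    by have := parent_lt x_path; rewrite -w_par; lia.
  by rewrite -(vtx_ord w) w_next; apply/eqP; rewrite eq_sym.
have [|chi [col_chi chi_top _ slack_chi]] := IH _ c _ top'; first lia.
exists chi; split=> //.
  by move=> w gt_w; rewrite chi_top ?recolour_id ?x_eq //; lia.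
have -> : parent i.+2 = x by rewrite /parent ifN.
by rewrite chi_top ?recolour_at // vtxK; lia.
Qed.

Definition connected_upto (i : nat) := forall a b, col a -> col b ->
  agree_above i a b -> unfrozen_upto i a -> unfrozen_upto i b -> reconfL a b.

Lemma shift_unfrozen i a : 2 <= i <= k + 2 -> col a -> unfrozen_upto i.+1 a ->
  exists2 a', reconfL a a' & agree_above i.+1 a' a /\ unfrozen_upto i a'.
Proof.
move=> i_mid col_a [v le_v unfr_v].
have r_aa := reconf_refl col_a.
have [lt_iv | le_vi] := ltnP i v; last by exists a => //; split=> //; exists v.
have x_path : 3 <= i.+1 < k + 4 by lia.
have v_eq : v = vtx i.+1 by apply/eqP; rewrite vtx_eq //; lia.
subst v.
have p_le : parent i.+1 <= i by have := parent_lt x_path; lia.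
set x := vtx i.+1 in unfr_v *; set p := parent i.+1 in p_le *.
have [fr_p | unfr_p] := frozenP adj L a p; last by exists a => //; split=> //; exists p.
have [y [Ly yx fresh]] := frozenPn unfr_v.
have px : adj p x by rewrite claw_sym adj_parent.
have p_ne_x : p != x by rewrite vtx_eq //; lia.
have [L_ax uniq_ax] := frozen_nbr_colour_unique (L_big p) (col_a.1 p) fr_p px.
exists (recolour a x y); first exact: (reconf_recolour claw_sym claw_irr r_aa Ly fresh).
split=> [w gt_w | ]; first by rewrite recolour_id // vtx_eq //; lia.
exists p => //; apply: (unfrozen_by L_ax).
  by rewrite recolour_id //; apply/eqP/col_a.2/adj_parent.
move=> w pw; have [-> | w_ne_x] := eqVneq w x; first by rewrite recolour_at; apply/eqP.
by rewrite recolour_id // => /(uniq_ax w pw) /eqP; rewrite (negbTE w_ne_x).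
Qed.

Lemma reconf_across i a b : 2 <= i <= k + 2 -> connected_upto i -> col a -> col b ->
  agree_above i.+1 a b -> unfrozen_upto i a -> unfrozen_upto i b -> reconfL a b.
Proof.
move=> i_mid conn col_a col_b a_b unfr_a unfr_b; set x := vtx i.+1.
have x_path : 3 <= i.+1 < k + 4 by lia.
have x_eq w : (w == x) = (w == i.+1 :> nat) by rewrite vtx_eq //; lia.
have [chi [col_chi chi_a chi_p slack_chi]] :=
  extend_path (b x) i_mid (is_Lcol_proper_on _ col_a).
have r_chi_psi : reconfL chi (recolour chi x (b x)).
  apply: (reconf_recolour claw_sym claw_irr (reconf_refl col_chi) (col_b.1 x)) => w xw.
  case/(adj_path x_path): (xw) => [-> | w_next]; first exact/eqP.
  by rewrite chi_a ?a_b ?w_next //; apply: col_b.2; rewrite claw_sym.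
have [_ col_psi] := reconf_is_Lcol r_chi_psi.
have r_a_chi : reconfL a chi.
  apply: conn => //; first by move=> w /chi_a ->.
  by apply: unfrozen_upto_mono (slack_unfrozen slack_chi); lia.
have r_psi_b : reconfL (recolour chi x (b x)) b.
  apply: conn => //.
    move=> w gt_w; have [-> | w_ne_x] := eqVneq w x; first by rewrite recolour_at.
    by rewrite recolour_id // chi_a // a_b //; move: w_ne_x; rewrite x_eq; lia.
  apply: unfrozen_upto_mono (slack_unfrozen (slack_recolour _ _ slack_chi)); first lia.
  by rewrite vtxK; lia.
exact: reconf_trans r_a_chi (reconf_trans r_chi_psi r_psi_b).
Qed.

Lemma connected_uptoS i : 2 <= i <= k + 2 -> connected_upto i -> connected_upto i.+1.
Proof.
move=> i_mid conn a b col_a col_b a_b unfr_a unfr_b.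
have [a' r_aa' [a'_a unfr_a']] := shift_unfrozen i_mid col_a unfr_a.
have [b' r_bb' [b'_b unfr_b']] := shift_unfrozen i_mid col_b unfr_b.
have [_ col_a'] := reconf_is_Lcol r_aa'; have [_ col_b'] := reconf_is_Lcol r_bb'.
apply: reconf_trans r_aa' (reconf_trans _ (reconf_sym r_bb')).
apply: reconf_across i_mid conn col_a' col_b' _ unfr_a' unfr_b'.
by move=> w gt_w; rewrite a'_a // a_b // b'_b.
Qed.

Definition leaves_avoid (s t : C) :=
  ~~ (L v1 \subset [set s; t]) && ~~ (L v2 \subset [set s; t]).

Lemma leaves_avoidC s t : leaves_avoid s t = leaves_avoid t s.
Proof. by rewrite /leaves_avoid setUC. Qed.

Lemma leaves_blocked s t : ~~ leaves_avoid s t ->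
  L v1 = [set s; t] \/ L v2 = [set s; t].
Proof.
by rewrite negb_and !negbK => /orP[] sub; [left | right]; apply: subset_set2_eq sub (L_gt1 _).
Qed.

Lemma leaf_avoids a l u : col a -> adj l v0 -> a l != u -> ~~ (L l \subset [set a v0; u]).
Proof.
move=> col_a l0 lu; apply: (not_subset_set2 (col_a.1 l)) lu.
by apply/eqP; apply: col_a.2.
Qed.

Lemma unfrozen_leaf_avoids a l u : col a -> (forall w, adj l w = (w == v0)) ->
  ~ frozen adj L a l -> ~~ (L l \subset [set a v0; u]).
Proof.
move=> col_a nbr_l /frozenPn[c [Lc cl fresh]].
have l0 : adj l v0 by rewrite nbr_l.
have [<- | lu] := eqVneq (a l) u; last exact: leaf_avoids.
by apply: (not_subset_set2 Lc) cl; apply/eqP/nesym/fresh.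
Qed.

Lemma exists_centre_hop a : col a -> unfrozen_upto 2 a ->
  exists u, [/\ u \in L v0, u != a v0, u != a v3 & leaves_avoid (a v0) u].
Proof.
move=> col_a [v /vtx_le2[] -> unfr].
- have [c [Lc ca fresh]] := frozenPn unfr.
  have avoid l : adj v0 l -> ~~ (L l \subset [set a v0; c]).
    by move=> v0l; apply: leaf_avoids => //; [rewrite claw_sym | apply/eqP/fresh].
  exists c; split=> //; first exact/eqP/nesym/fresh/adj_v0v3.
  by rewrite /leaves_avoid !avoid // claw_sym ?adj_v1E ?adj_v2E.
- have [u [Lu ua0 ua3 ua2]] := avoid3 (a v0) (a v3) (a v2) L_v0_gt3.
  exists u; split=> //; rewrite /leaves_avoid unfrozen_leaf_avoids //=; last exact: adj_v1E.
  by apply: leaf_avoids; rewrite // ?adj_v2E // eq_sym.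
- have [u [Lu ua0 ua3 ua1]] := avoid3 (a v0) (a v3) (a v1) L_v0_gt3.
  exists u; split=> //; rewrite /leaves_avoid (unfrozen_leaf_avoids _ col_a adj_v2E) // andbT.
  by apply: leaf_avoids; rewrite // ?adj_v1E // eq_sym.
Qed.

Definition centre_reachable (a : V -> C) (t : C) :=
  exists2 q, reconfL a q & agree_above 2 q a /\ q v0 = t.

Lemma centre_hop a s t : centre_reachable a s -> leaves_avoid s t ->
  t \in L v0 -> t != a v3 -> centre_reachable a t.
Proof.
move=> [q r_aq [q_a q0]] /andP[/subsetPn[c1 L1]] /[swap] /subsetPn[c2 L2].
rewrite !inE !negb_or => /andP[c2s c2t] /andP[c1s c1t] L0t ta3.
have v01 : v0 != v1 by rewrite vtx_small_eq.
set q1 := recolour q v1 c1; set q2 := recolour q1 v2 c2.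
have r1 : reconfL a q1.
  apply: (reconf_recolour claw_sym claw_irr r_aq L1) => w; rewrite adj_v1E => /eqP ->.
  by rewrite q0; apply/eqP; rewrite eq_sym.
have r2 : reconfL a q2.
  apply: (reconf_recolour claw_sym claw_irr r1 L2) => w; rewrite adj_v2E => /eqP ->.
  by rewrite /q1 recolour_id // q0; apply/eqP; rewrite eq_sym.
exists (recolour q2 v0 t); last first.
  split; last exact: recolour_at.
  by move=> w /[dup] /q_a <- /vtx_gt2 /and3P[w0 w1 w2]; rewrite /q2 /q1 !recolour_id.
have q3 : q v3 = a v3 by apply: q_a; rewrite vtxK; lia.
have a3t : a v3 != t by rewrite eq_sym.
apply: (reconf_recolour claw_sym claw_irr r2 L0t) => w /adj_v0[] -> /eqP;
  by rewrite /q2 /q1 /recolour !vtx_small_eq //= ?q3; apply/negP.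
Qed.

Lemma reconf_centre_reachable a b : col b -> agree_above 2 b a ->
  centre_reachable a (b v0) -> reconfL a b.
Proof.
move=> col_b b_a [q r_aq [q_a q0]].
have fresh1 w : adj v1 w -> q w <> b v1.
  by rewrite adj_v1E => /eqP ->; rewrite q0; apply: col_b.2; rewrite claw_sym adj_v1E.
apply: (reconf_step (reconf_recolour claw_sym claw_irr r_aq (col_b.1 v1) fresh1) col_b).
exists v2 => w w2; have [-> | w1] := eqVneq w v1; first by rewrite recolour_at.
rewrite recolour_id //; have [gt2 | /vtx_le2[] w_eq] := ltnP 2 w; first by rewrite q_a ?b_a.
- by rewrite w_eq q0.
- by rewrite w_eq eqxx in w1.
- by case: w2.
Qed.

Lemma connected_upto2 : connected_upto 2.
Proof.
move=> a b col_a col_b a_b unfr_a unfr_b.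
have b3 : b v3 = a v3 by rewrite a_b // vtxK; lia.
have reach_s : centre_reachable a (a v0) by exists a; first exact: reconf_refl.
have L0t : b v0 \in L v0 := col_b.1 v0.
have t3 : b v0 != a v3 by rewrite -b3; apply/eqP/col_b.2/adj_v0v3.
have finish := reconf_centre_reachable col_b (fun w gt2 => esym (a_b w gt2)).
have [u [L0u us u3 su]] := exists_centre_hop col_a unfr_a.
have [w [L0w wt w3 tw]] := exists_centre_hop col_b unfr_b; rewrite b3 in w3.
set s := a v0 in reach_s us su *; set t := b v0 in L0t t3 wt tw finish *.
have [st | st] := eqVneq s t; first by apply: finish; rewrite -st.
have [|st_blocked] := boolP (leaves_avoid s t).
  by move=> st_ok; apply/finish/(centre_hop reach_s).
have [|ut_blocked] := boolP (leaves_avoid u t).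
  by move=> ut_ok; apply/finish/(centre_hop (centre_hop reach_s su L0u u3)).
have [|sw_blocked] := boolP (leaves_avoid s w).
  move=> sw_ok; rewrite leaves_avoidC in tw.
  by apply/finish/(centre_hop (centre_hop reach_s sw_ok L0w w3)).
(* Each of these three distinct pairs is [L v1] or [L v2]. *)
have : [\/ [set s; t] = [set u; t], [set s; t] = [set s; w] | [set u; t] = [set s; w]].
  move: (leaves_blocked st_blocked) (leaves_blocked ut_blocked) (leaves_blocked sw_blocked).
  by do 3 case=> <-; first [exact: Or31 | exact: Or32 | exact: Or33].
case=> E.
- by move: (set21 s t); rewrite E !inE (eq_sym s) (negbTE us) (negbTE st).
- by move: (set22 s t); rewrite E !inE (eq_sym t s) (eq_sym t w) (negbTE st) (negbTE wt).
- by move: (set22 u t); rewrite E !inE (eq_sym t s) (eq_sym t w) (negbTE st) (negbTE wt).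
Qed.

Lemma connected_upto_path i : 2 <= i <= k + 3 -> connected_upto i.
Proof.
elim: i => [// | i IH]; have [-> _ | ne1 i_range] := eqVneq i 1; first exact: connected_upto2.
by apply: connected_uptoS; [lia | apply: IH; lia].
Qed.

End SubdividedClaw.

Theorem mainTheorem15 (k : nat) (C : finType) (L : 'I_(k + 4) -> {set C})
  (alpha beta : 'I_(k + 4) -> C) :
  (forall v, (deg (subdiv_claw k) v).+1 <= #|L v|) ->
  is_Lcol (subdiv_claw k) L alpha -> is_Lcol (subdiv_claw k) L beta ->
  unfrozen (subdiv_claw k) L alpha -> unfrozen (subdiv_claw k) L beta ->
  reconf (subdiv_claw k) L alpha beta.
Proof.
move=> L_big col_a col_b [va unfr_a] [vb unfr_b].
have top (v : 'I_(k + 4)) : v <= k + 3 by have := ltn_ord v; lia.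
apply: (connected_upto_path L_big (i := k + 3)) => //; first lia.
- by move=> v; rewrite ltnNge top.
- by exists va.
- by exists vb.
Qed.
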